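(* Let $(G;+,\cdot)$ be a finite field of order $q$. Then the class of affine functions of arity at least $\max(q,3)+1$ over $(G;+,\cdot)$ is reconstructible: for every $n \geq \max(q,3)+1$, every affine $f\colon G^n\to G$ and every function $g \colon G^n \to G$ (not assumed affine) with $\operatorname{deck} g = \operatorname{deck} f$, we have $g \equiv f$.
   Context: A function $f\colon G^n\to G$ is affine if $f(x_1,\dots,x_n) = a_1x_1+\dots+a_nx_n+c$ for some $a_i,c\in G$. Identification minor: for $f\colon A^n\to B$ and $I=\{i,j\}$, $i<j$, $f_I\colon A^{n-1}\to B$ is $f_I(x_1,\dots,x_{n-1}) = f(x_1,\dots,x_{j-1},x_i,x_j,\dots,x_{n-1})$. Two functions $f,g\colon A^n\to B$ are equivalent, $f\equiv g$, if $f(x_1,\dots,x_n) = g(x_{\sigma(1)},\dots,x_{\sigma(n)})$ for some permutation $\sigma$ of $\{1,\dots,n\}$. The deck of $f$ is the multiset $\langle f_I/{\equiv} : I\rangle$ of equivalence classes of all $\binom n2$ identification minors of $f$. *)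

From HB Require Import structures.
From mathcomp Require Import all_boot all_order all_algebra all_fingroup all_field.
Set Implicit Arguments. Unset Strict Implicit. Unset Printing Implicit Defensive.
Import GRing.Theory.
Local Open Scope ring_scope.

(* An n-ary function G^n -> G is represented as n.-tuple G -> G;
   coordinates are indexed 0..n-1. *)

Definition affine (G : fieldType) (n : nat) (f : n.-tuple G -> G) : Prop :=
  exists (a : 'I_n -> G) (c : G),
    forall x : n.-tuple G, f x = \sum_(i < n) a i * tnth x i + c.

Definition equiv_fun (G : Type) (n : nat) (f g : n.-tuple G -> G) : Prop :=
  exists s : 'S_n, forall x : n.-tuple G,
    f x = g [tuple tnth x (s i) | i < n].

(* Identification minor f_I for I = {i,j}, i < j (0-indexed):
   f_I(x_0,...,x_{n-2}) = f(x_0,...,x_{j-1}, x_i, x_j, ..., x_{n-2}). *)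
Definition minor (G : fieldType) (n : nat) (f : n.-tuple G -> G) (i j : nat)
  : n.-1.-tuple G -> G :=
  fun x => f [tuple (if (k < j)%N then nth 0 x k
                     else if k == j :> nat then nth 0 x i
                     else nth 0 x k.-1) | k < n].

Definition pairs (n : nat) := {p : 'I_n * 'I_n | (p.1 < p.2)%N}.

(* deck f = deck g : the multisets of ≡-classes of the minors coincide, i.e.
   there is a bijection s of the 2-subsets with f_I ≡ g_{s(I)}. *)
Definition same_deck (G : fieldType) (n : nat) (f g : n.-tuple G -> G) : Prop :=
  exists s : pairs n -> pairs n, bijective s /\
    forall I : pairs n,
      equiv_fun (minor f (val I).1 (val I).2)
                (minor g (val (s I)).1 (val (s I)).2).

From HB Require Import structures.
From mathcomp Require Import all_boot all_order all_algebra all_fingroup all_field.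
From mathcomp Require Import zify ring.
Set Implicit Arguments. Unset Strict Implicit. Unset Printing Implicit Defensive.
Import GRing.Theory.

(* Equivalence preserves affineness and the minors of an affine map
   are affine, so every identification minor g_{ij} is affine; thus g agrees with an affine
   map on each diagonal {x | x_i = x_j} ([minor_affine_diag]).  Since n > q every point
   lies on some diagonal, and since n >= 4 the representations on different diagonals glue
   to one affine map with coefficients g(e_k) - g(0) ([diag_affine_glue]).

   The minor f_{ij} of
   f = sum_k a_k x_k + c has constant c and coefficients [merge_coef a i j] (a_i and a_j
   replaced by a_i + a_j), and equivalent affine maps have equal constants and equal
   coefficient multisets.  Hence the deck bijection matches the merged coefficient multisets
   of f and g.  A double-counting argument over the finite abelian group G, comparing the
   multiplicity of each value with its number of representations as a_i + a_j
   ([merged_match_balance]), shows that the coefficient multisets coincide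
   ([merged_match_mult]); a permutation aligning the coefficients then gives g == f. *)

Lemma sum_nat_gt0_witness (T : finType) (P : pred T) (F : T -> nat) :
  (0 < \sum_(x | P x) F x)%N -> exists2 x, P x & (0 < F x)%N.
Proof.
move=> sum_gt0; case: (pickP [pred x | P x && (0 < F x)%N]) => [x /andP [] | none].
  by exists x.
move: sum_gt0; rewrite big1 // => x Px; have := none x; rewrite /= Px /=; lia.
Qed.

Lemma sum_nat_eq_pointwise (T : finType) (F H : T -> nat) :
  (forall x, F x <= H x)%N -> (\sum_x F x = \sum_x H x)%N -> forall x, F x = H x.
Proof.
move=> FleH eq_sum x.
have : (\sum_x (H x - F x) == 0)%N by rewrite sumnB // eq_sum subnn.
by rewrite sum_nat_eq0 => /forallP /(_ x) /=; have := FleH x; lia.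
Qed.

Section Multiplicity.
Variable T : eqType.

Definition mult (N : nat) (a : 'I_N -> T) (v : T) : nat := \sum_(k < N) (a k == v).

Lemma mult_count N (a : 'I_N -> T) v : mult a v = count_mem v [tuple a k | k < N].
Proof.
rewrite /mult /= count_map -sum1_count big_enum_cond /= [RHS]big_mkcond /=.
by apply: eq_bigr => k _; case: (a k == v).
Qed.

Lemma mult_perm N (a b : 'I_N -> T) :
  (forall v, mult a v = mult b v) -> exists p : 'S_N, forall k, a k = b (p k).
Proof.
move=> eq_mult.
have : perm_eq [tuple a k | k < N] [tuple b k | k < N].
  by apply/allP => v _; apply/eqP; rewrite -!mult_count.
case/tuple_permP => p eq_ab; exists p => k.
have eq_tuples : [tuple a k | k < N] = [tuple tnth [tuple b k | k < N] (p k) | k < N].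
  exact: val_inj.
by have := congr1 (fun t => tnth t k) eq_tuples; rewrite !tnth_mktuple.
Qed.

Lemma mult_gt0 N (a : 'I_N -> T) v : (0 < mult a v)%N -> exists k, a k = v.
Proof. by case/sum_nat_gt0_witness => k _; case: eqP => // a_k _; exists k. Qed.

Lemma mult_gt1 N (a : 'I_N -> T) v : (1 < mult a v)%N ->
  exists i j : 'I_N, [/\ (i < j)%N, a i = v & a j = v].
Proof.
move=> mult_gt1; have [i a_i] := mult_gt0 (ltnW mult_gt1).
move: mult_gt1; rewrite /mult (bigD1 i) //= a_i eqxx add1n ltnS.
case/sum_nat_gt0_witness => j j_neq_i; case: eqP => // a_j _.
case: (ltngtP i j) => [lt_ij | lt_ji | eq_ij]; first by exists i, j.
  by exists j, i.
by move: j_neq_i; rewrite (_ : j = i) ?eqxx //; apply: val_inj.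
Qed.
End Multiplicity.

Section FiniteMultiplicity.
Variable T : finType.

Lemma sum_by_mult N (a : 'I_N -> T) (F : T -> nat) :
  (\sum_(k < N) F (a k) = \sum_(x : T) mult a x * F x)%N.
Proof.
under [RHS]eq_bigr do rewrite /mult big_distrl /=.
rewrite exchange_big /=; apply: eq_bigr => k _.
rewrite (bigD1 (a k)) //= eqxx mul1n big1 ?addn0 // => x /negbTE.
by rewrite eq_sym => ->.
Qed.

Lemma mult_total N (a : 'I_N -> T) : (\sum_(x : T) mult a x = N)%N.
Proof.
under eq_bigr do rewrite -[mult a _]muln1.
by rewrite -sum_by_mult sum_nat_const card_ord muln1.
Qed.
End FiniteMultiplicity.

Lemma sum_pairs_sym N (F : 'I_N -> 'I_N -> nat) :
  (\sum_(I : pairs N) (F (val I).1 (val I).2 + F (val I).2 (val I).1) =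
   \sum_(i < N) \sum_(j < N | j != i) F i j)%N.
Proof.
have -> : (\sum_(I : pairs N) (F (val I).1 (val I).2 + F (val I).2 (val I).1) =
  \sum_(p : 'I_N * 'I_N | (p.1 < p.2)%N) (F p.1 p.2 + F p.2 p.1))%N.
  symmetry; rewrite (reindex_omap (val : pairs N -> _) insub); last first.
    by move=> p lt_p; rewrite insubT.
  by apply: eq_bigl => -[p lt_p] /=; rewrite insubT lt_p /= eqxx.
rewrite big_split /=.
rewrite [X in (_ + X)%N](reindex_inj (h := fun p : 'I_N * 'I_N => (p.2, p.1))); last first.
  by move=> [x1 x2] [y1 y2] [-> ->].
rewrite [RHS]pair_big_dep /= [RHS](bigID (fun p : 'I_N * 'I_N => (p.1 < p.2)%N)) /=.
congr (_ + _)%N; apply: eq_bigl => -[i j] /=.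
  by case: (ltngtP i j) => h //; rewrite ?andbF // neq_ltn h orbT.
case: (ltngtP i j) => h //; rewrite ?andbF ?andbT //; first by rewrite neq_ltn h.
by apply/esym/negbTE; rewrite negbK; apply/eqP/val_inj.
Qed.

Section MergedCoefficients.
Variable G : zmodType.
Local Open Scope ring_scope.

(* The coefficient family of the minor f_{ij} of [f = \sum_k a_k x_k + c]: the variable
   x_j disappears and its coefficient is added to that of x_i.  Index [m] of the minor
   stands for index [lift j m] of [f]. *)
Definition merge_coef n' (a : 'I_n'.+1 -> G) (i j : 'I_n'.+1) (m : 'I_n') : G :=
  a (lift j m) + (if m == i :> nat then a j else 0).

End MergedCoefficients.

Section MergedFamilies.
Variable G : finZmodType.
Local Open Scope ring_scope.

Lemma mult_merge n' (a : 'I_n'.+1 -> G) (i j : 'I_n'.+1) v : (i < j)%N ->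
  (mult (merge_coef a i j) v + (a i == v) + (a j == v) = mult a v + ((a i + a j)%R == v))%N.
Proof.
move=> lt_ij; have lt_i : (i < n')%N := leq_trans lt_ij (ltn_ord j).
have lift_i : lift j (Ordinal lt_i) = i by apply: val_inj; rewrite /= /bump leqNgt lt_ij.
rewrite /merge_coef /mult [in RHS](bigD1_ord j) //= (bigD1 (Ordinal lt_i)) //= eqxx lift_i.
rewrite [in RHS](bigD1 (Ordinal lt_i)) //= lift_i.
have -> : (\sum_(m < n' | m != Ordinal lt_i)
    ((a (lift j m) + (if m == i :> nat then a j else 0))%R == v) =
    \sum_(m < n' | m != Ordinal lt_i) (a (lift j m) == v))%N.
  apply: eq_bigr => m m_neq_i; rewrite ifF ?addr0 //; apply/negbTE.
  by apply: contra m_neq_i => /eqP eq_mi; apply/eqP/val_inj.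
set rest := (\sum_(m < n' | m != Ordinal lt_i) (a (lift j m) == v))%N.
by move: (_ + _ == v) (a i == v) (a j == v) => [] [] [] /=; lia.
Qed.

Definition pair_sums N (a : 'I_N -> G) (v : G) : nat :=
  (\sum_(i < N) \sum_(j < N | j != i) ((a i + a j)%R == v))%N.

Lemma sum_mult_merge n' (a : 'I_n'.+1 -> G) v :
  (2 * \sum_(I : pairs n'.+1) mult (merge_coef a (val I).1 (val I).2) v
   = n' * n'.-1 * mult a v + pair_sums a v)%N.
Proof.
have others (i : 'I_n'.+1) : (\sum_(j < n'.+1 | j != i) 1 = n')%N.
  by rewrite sum1_card cardC1 card_ord.
have ends : (\sum_(I : pairs n'.+1) ((a (val I).1 == v) + (a (val I).2 == v))
             = n' * mult a v)%N.
  rewrite (sum_pairs_sym (fun i _ => (a i == v : nat))) /mult big_distrr /=.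
  by apply: eq_bigr => i _; rewrite sum_nat_const -sum1_card others mulnC.
have sums : (2 * \sum_(I : pairs n'.+1) ((a (val I).1 + a (val I).2)%R == v)
             = pair_sums a v)%N.
  rewrite /pair_sums -sum_pairs_sym mul2n -addnn -big_split /=.
  by apply: eq_bigr => I _; rewrite [a (val I).2 + _]addrC.
have whole : (2 * \sum_(I : pairs n'.+1) mult a v = n'.+1 * n' * mult a v)%N.
  rewrite mul2n -addnn -big_split /= (sum_pairs_sym (fun _ _ => mult a v)).
  under eq_bigr do rewrite sum_nat_const -sum1_card others.
  by rewrite sum_nat_const card_ord mulnA.
have merged : (\sum_(I : pairs n'.+1) mult (merge_coef a (val I).1 (val I).2) v + n' * mult a v
    = \sum_(I : pairs n'.+1) mult a v
      + \sum_(I : pairs n'.+1) ((a (val I).1 + a (val I).2)%R == v))%N.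
  rewrite -ends -!big_split; apply: eq_bigr => I _.
  by rewrite /= addnA mult_merge //; exact: (valP I).
have split_whole : (n'.+1 * n' * mult a v = n' * n'.-1 * mult a v + 2 * (n' * mult a v))%N.
  by move: (mult a v) => m; case: (n') => //= k; nia.
lia.
Qed.

Lemma pair_sums_gt0 N (a : 'I_N -> G) (i j : 'I_N) :
  i != j -> (0 < pair_sums a (a i + a j)%R)%N.
Proof.
move=> neq_ij; rewrite /pair_sums (bigD1 i) //= (bigD1 j) 1?eq_sym //=.
by rewrite eqxx; lia.
Qed.

Lemma pair_sums_total N (a : 'I_N -> G) : (\sum_(v : G) pair_sums a v = N * N.-1)%N.
Proof.
have one_hit (w : G) : (\sum_(v : G) (w == v) = 1)%N.
  by rewrite (bigD1 w) //= eqxx big1 // => v /negbTE; rewrite eq_sym => ->.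
rewrite /pair_sums exchange_big /=.
under eq_bigr do rewrite exchange_big /=.
under eq_bigr do under eq_bigr do rewrite one_hit.
under eq_bigr do rewrite sum1_card cardC1 card_ord.
by rewrite sum_nat_const card_ord.
Qed.

(* Counting ordered pairs by the value of their first coordinate, diagonal included. *)
Lemma pair_sums_mult N (a : 'I_N -> G) v :
  (pair_sums a v + \sum_(x : G) ((x + x)%R == v) * mult a x
   = \sum_(x : G) mult a x * mult a (v - x)%R)%N.
Proof.
have with_diag : (\sum_(i < N) \sum_(j < N) ((a i + a j)%R == v)
    = pair_sums a v + \sum_(i < N) ((a i + a i)%R == v))%N.
  rewrite /pair_sums -big_split /=; apply: eq_bigr => i _.
  by rewrite (bigD1 i) //= addnC.
have by_first : (\sum_(i < N) \sum_(j < N) ((a i + a j)%R == v)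
    = \sum_(i < N) mult a (v - a i)%R)%N.
  apply: eq_bigr => i _; apply: eq_bigr => j _; congr (nat_of_bool _).
  by apply/eqP/eqP => [<- | ->]; [rewrite addrC addKr | rewrite addrC subrK].
rewrite (sum_by_mult a (fun x => ((x + x)%R == v : nat))) in with_diag.
rewrite (sum_by_mult a (fun x => mult a (v - x)%R)) in by_first.
under eq_bigr do rewrite mulnC.
by rewrite -by_first with_diag.
Qed.

(* For an integer-valued multiplicity function [c], the signed count of ordered pairs of
   distinct elements with sum [v]. *)
Definition pair_conv (c : G -> int) (v : G) : int :=
  \sum_(x : G) c x * c (v - x) - \sum_(x : G) (x + x == v)%:Z * c x.

Lemma pair_sums_conv N (a : 'I_N -> G) v :
  (pair_sums a v)%:Z = pair_conv (fun x => (mult a x)%:Z) v.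
Proof.
apply/eqP; rewrite /pair_conv eq_sym subr_eq; apply/eqP.
have sumz (F : G -> nat) : (\sum_(x : G) F x)%:Z = \sum_(x : G) (F x)%:Z.
  exact: (big_morph Posz PoszD).
under eq_bigr do rewrite -PoszM.
under [X in _ + X]eq_bigr do rewrite -PoszM.
by rewrite -!sumz -PoszD pair_sums_mult.
Qed.

Lemma sum_indicator_r (F : G -> int) w : \sum_(x : G) F x * (x == w)%:Z = F w.
Proof.
rewrite (bigD1 w) //= eqxx mulr1 big1 ?addr0 // => x /negbTE ->.
by rewrite mulr0.
Qed.

Lemma sum_indicator_l (F : G -> int) w : \sum_(x : G) (x == w)%:Z * F x = F w.
Proof. by under eq_bigr do rewrite mulrC; rewrite sum_indicator_r. Qed.

Lemma pair_conv_shift (c c' : G -> int) v w :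
  (forall x, c' x = c x + (x == w)%:Z - (x == v)%:Z) ->
  pair_conv c' v - pair_conv c v = 2 * (c (v - w) - c 0 - (w == 0)%:Z + (v == 0)%:Z).
Proof.
move=> c'E; have sub_eq x y : (v - x == y) = (x == v - y).
  by apply/eqP/eqP => [<- | ->]; rewrite subKr.
rewrite /pair_conv.
under eq_bigr do rewrite !c'E !sub_eq subrr.
under [X in _ - X - _]eq_bigr do rewrite c'E.
set S1 := \sum_i _ * _.
have -> : S1 = \sum_(x : G) c x * c (v - x) + \sum_(x : G) c x * (x == v - w)%:Z
   - \sum_(x : G) c x * (x == 0)%:Z + \sum_(x : G) (x == w)%:Z * c (v - x)
   + \sum_(x : G) (x == w)%:Z * (x == v - w)%:Z - \sum_(x : G) (x == w)%:Z * (x == 0)%:Z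
   - \sum_(x : G) (x == v)%:Z * c (v - x) - \sum_(x : G) (x == v)%:Z * (x == v - w)%:Z
   + \sum_(x : G) (x == v)%:Z * (x == 0)%:Z.
  rewrite /S1; do ![rewrite -big_split /= | rewrite -sumrB /=].
  by apply: eq_bigr => x _; ring.
set S2 := \sum_i _ * (_ + _ - _).
have -> : S2 = \sum_(x : G) (x + x == v)%:Z * c x + \sum_(x : G) (x + x == v)%:Z * (x == w)%:Z
   - \sum_(x : G) (x + x == v)%:Z * (x == v)%:Z.
  rewrite /S2; do ![rewrite -big_split /= | rewrite -sumrB /=].
  by apply: eq_bigr => x _; ring.
rewrite !sum_indicator_l !sum_indicator_r subrr.
have -> : (w == v - w) = (w + w == v) by rewrite -sub_eq subr_eq eq_sym.
have -> : (v == v - w) = (w == 0) by rewrite eq_sym sub_eq subrr.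
have -> : (v + v == v) = (v == 0) by rewrite -subr_eq0 addrK.
ring.
Qed.

End MergedFamilies.

Section Excess.
Variable T : finType.
Implicit Types A B : T -> nat.

Definition excess A B : nat := \sum_(x : T) (A x - B x).

Lemma excess_sym A B : \sum_x A x = \sum_x B x -> excess A B = excess B A.
Proof.
move=> eq_total.
have : (\sum_x (A x + (B x - A x)) = \sum_x (B x + (A x - B x)))%N.
  by apply: eq_bigr => x _; lia.
by rewrite !big_split /= eq_total => /addnI.
Qed.

Lemma excess0 A B : \sum_x A x = \sum_x B x -> excess A B = 0%N -> forall x, A x = B x.
Proof.
move=> eq_total excess_AB x; have excess_BA := excess_sym eq_total.
move: excess_BA; rewrite excess_AB => /esym/eqP; move/eqP: excess_AB.
rewrite /excess !sum_nat_eq0 => /forallP /(_ x) /= AleB /forallP /(_ x) /=; lia.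
Qed.

Lemma sum_minn A B : \sum_x minn (A x) (B x) = (\sum_x A x - excess A B)%N.
Proof.
rewrite /excess -sumnB => [|x _]; last exact: leq_subr.
by apply: eq_bigr => x _; rewrite minnE.
Qed.

Lemma excess1_shift A B : excess A B = 1%N -> excess B A = 1%N ->
  exists v w, v != w /\ forall x, (B x + (x == v) = A x + (x == w))%N.
Proof.
move=> /eqP /sum_nat_eq1 [v [_ Av rest_v]] /eqP /sum_nat_eq1 [w [_ Bw rest_w]].
have neq_vw : v != w by apply/eqP => eq_vw; move: Bw; rewrite -eq_vw; lia.
exists v, w; split=> // x.
case: (eqVneq x v) => [-> | neq_xv]; first by rewrite (negbTE neq_vw) /=; lia.
case: (eqVneq x w) => [-> | neq_xw] /=; first by lia.
by have := rest_v x neq_xv isT; have := rest_w x neq_xw isT; lia.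
Qed.

End Excess.

Section MultisetReconstruction.
Variable G : finZmodType.
Local Open Scope ring_scope.

Definition merged_match n' (a b : 'I_n'.+1 -> G) (s : pairs n'.+1 -> pairs n'.+1) : Prop :=
  forall (I : pairs n'.+1) (v : G), mult (merge_coef a (val I).1 (val I).2) v
              = mult (merge_coef b (val (s I)).1 (val (s I)).2) v.

Lemma merged_match_inv n' (a b : 'I_n'.+1 -> G) s s' :
  cancel s' s -> merged_match a b s -> merged_match b a s'.
Proof. by move=> s'K match_ab J v; rewrite match_ab s'K. Qed.

(* A nonzero value u repeated in [a] is merged with itself somewhere; the matching merge
   of [b] loses at most two copies of u, so u is at most as frequent in [b], and if
   equally frequent the two merges were identical operations. *)
Lemma repeated_value n' (a b : 'I_n'.+1 -> G) s u :
  merged_match a b s -> u != 0 -> (1 < mult a u)%N ->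
  (mult b u <= mult a u)%N /\ (mult a u = mult b u -> forall x, mult a x = mult b x).
Proof.
move=> match_ab u_neq0 /mult_gt1 [i [j [lt_ij a_i a_j]]].
have := match_ab (exist _ (i, j) lt_ij); case: (s _) => -[k l] lt_kl /= match_ijkl.
have uu_neq_u : (u + u == u) = false by rewrite -subr_eq0 addrK (negbTE u_neq0).
have mult_a := mult_merge a u lt_ij; rewrite a_i a_j eqxx uu_neq_u in mult_a.
have mult_b := mult_merge b u lt_kl; rewrite -match_ijkl in mult_b.
split; first by move: mult_a mult_b; lia.
move=> eq_mult_u.
have [b_k b_l] : b k = u /\ b l = u.
  by move: mult_a mult_b; case: eqP => b_k; case: eqP => b_l //=; lia.
move=> x; have := mult_merge a x lt_ij; have := mult_merge b x lt_kl.
by rewrite -match_ijkl a_i a_j b_k b_l /=; lia.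
Qed.

Lemma common_repeated_value n' (a b : 'I_n'.+1 -> G) s u :
  bijective s -> merged_match a b s -> u != 0 ->
  (1 < mult a u)%N -> (1 < mult b u)%N -> forall x, mult a x = mult b x.
Proof.
move=> [s' _ s'K] match_ab u_neq0 rep_a rep_b.
have [le_ba eq_ab] := repeated_value match_ab u_neq0 rep_a.
have [le_ab _] := repeated_value (merged_match_inv s'K match_ab) u_neq0 rep_b.
by apply: eq_ab; lia.
Qed.

Lemma merged_match_balance n' (a b : 'I_n'.+1 -> G) s v :
  bijective s -> merged_match a b s ->
  (n' * n'.-1 * mult a v + pair_sums a v = n' * n'.-1 * mult b v + pair_sums b v)%N.
Proof.
move=> s_bij match_ab; rewrite -!sum_mult_merge; congr (2 * _)%N.
rewrite [RHS](reindex_inj (bij_inj s_bij)); apply: eq_bigr => I _; exact: match_ab.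
Qed.

Section Balance.
Variables (N K : nat) (a b : 'I_N -> G).

Hypothesis balance :
  forall v, (K * mult a v + pair_sums a v = K * mult b v + pair_sums b v)%N.

Let excess_ab_ba : excess (mult a) (mult b) = excess (mult b) (mult a).
Proof. by apply: excess_sym; rewrite !mult_total. Qed.

(* Each unit of excess of [a] at v forces K pair sums of [b] equal to v. *)
Lemma balance_excess_bound : (K * excess (mult a) (mult b) <= N * N.-1)%N.
Proof.
rewrite -(pair_sums_total b) /excess big_distrr /=.
by apply: leq_sum => v _; have := balance v; rewrite mulnBr; lia.
Qed.

Lemma balance_tight : (K * excess (mult a) (mult b) = N * N.-1)%N ->
  forall v, pair_sums a v = 0%N \/ pair_sums b v = 0%N.
Proof.
move=> tight v.
have /(_ v) eq_b : forall v, (K * (mult a v - mult b v))%N = pair_sums b v.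
  apply: sum_nat_eq_pointwise => [x | ]; first by have := balance x; rewrite mulnBr; lia.
  by rewrite pair_sums_total -big_distrr -tight.
have /(_ v) eq_a : forall v, (K * (mult b v - mult a v))%N = pair_sums a v.
  apply: sum_nat_eq_pointwise => [x | ]; first by have := balance x; rewrite mulnBr; lia.
  by rewrite pair_sums_total -big_distrr -tight excess_ab_ba.
case: (leqP (mult a v) (mult b v)) => [le_ab | /ltnW le_ba].
  by right; rewrite -eq_b (eqP le_ab) muln0.
by left; rewrite -eq_a (eqP le_ba) muln0.
Qed.

End Balance.

Lemma common_pair_sum N (a b : 'I_N -> G) :
  (1 < \sum_(x : G) minn (mult a x) (mult b x))%N ->
  exists v, (0 < pair_sums a v)%N /\ (0 < pair_sums b v)%N.
Proof.
move=> shared; have [x _ shared_x] := sum_nat_gt0_witness (ltnW shared).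
case: (leqP 2 (minn (mult a x) (mult b x))) => [|lt_x2].
  rewrite leq_min => /andP [/mult_gt1 [i [j [lt_ij a_i a_j]]] /mult_gt1 [k [l [lt_kl b_k b_l]]]].
  exists (x + x); split.
    by rewrite -{1}a_i -a_j; apply: pair_sums_gt0; rewrite neq_ltn lt_ij.
  by rewrite -{1}b_k -b_l; apply: pair_sums_gt0; rewrite neq_ltn lt_kl.
move: shared; rewrite (bigD1 x) //= => shared.
have [y neq_yx shared_y] : exists2 y, y != x & (0 < minn (mult a y) (mult b y))%N.
  apply: sum_nat_gt0_witness; move: shared lt_x2.
  by set m := minn _ _; set rest := (\sum_(y | y != x) _)%N; lia.
move: shared_x shared_y; rewrite !leq_min.
move=> /andP [/mult_gt0 [i a_i] /mult_gt0 [k b_k]] /andP [/mult_gt0 [j a_j] /mult_gt0 [l b_l]].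
exists (x + y); split.
  rewrite -a_i -a_j; apply: pair_sums_gt0; apply: contra neq_yx => /eqP eq_ij.
  by rewrite -a_j -a_i eq_ij.
rewrite -b_k -b_l; apply: pair_sums_gt0; apply: contra neq_yx => /eqP eq_kl.
by rewrite -b_l -b_k eq_kl.
Qed.

Lemma excess_eq_mult N (a b : 'I_N -> G) :
  (forall x, mult a x = mult b x) -> excess (mult a) (mult b) = 0%N.
Proof. by move=> eq_ab; rewrite /excess big1 // => x _; rewrite eq_ab subnn. Qed.

(* Excess one: [b] is [a] with one copy of v replaced by w.  By the balance at v, the
   pair sums of [b] take the value v exactly K = (n-1)(n-2) more times than those of [a];
   computing this difference directly ([pair_conv_shift]) shows that the nonzero value
   v - w occurs at least three times in [a], hence twice in [b]. *)
Lemma excess1_impossible n' (a b : 'I_n'.+1 -> G) s :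
  (3 <= n')%N -> bijective s -> merged_match a b s -> excess (mult a) (mult b) <> 1%N.
Proof.
move=> n'_ge3 s_bij match_ab excess1.
have excess1' : excess (mult b) (mult a) = 1%N by rewrite -excess_sym ?mult_total.
have [v [w [neq_vw shift]]] := excess1_shift excess1 excess1'.
have K_ge6 : (6 <= n' * n'.-1)%N by move: n'_ge3; case: (n') => // k; nia.
have jump : pair_sums b v = (pair_sums a v + n' * n'.-1)%N.
  have := merged_match_balance v s_bij match_ab.
  have -> : mult a v = (mult b v).+1 by have := shift v; rewrite eqxx (negbTE neq_vw) /=; lia.
  by rewrite mulnS; set K := (n' * n'.-1)%N; lia.
have shift_z x : (mult b x)%:Z = (mult a x)%:Z + (x == w)%:Z - (x == v)%:Z.
  by have := shift x; case: (x == v); case: (x == w) => /=; lia.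
have := pair_conv_shift shift_z; rewrite -!pair_sums_conv jump PoszD addrAC subrr add0r.
move=> mult_vw.
have mult_a_vw : (3 <= mult a (v - w)%R)%N.
  have a_v : (0 < mult a v)%N by have := shift v; rewrite eqxx (negbTE neq_vw); lia.
  move: mult_vw; case: (eqVneq v 0) => [v0 | _] /=; last by lia.
  by move: a_v; rewrite v0; lia.
have mult_b_vw : (1 < mult b (v - w)%R)%N by have := shift (v - w); lia.
have vw_neq0 : v - w != 0 by rewrite subr_eq0.
have mult_a_vw' : (1 < mult a (v - w)%R)%N by apply: leq_trans mult_a_vw.
have := common_repeated_value s_bij match_ab vw_neq0 mult_a_vw' mult_b_vw.
by move/excess_eq_mult; rewrite excess1.
Qed.

(* Excess two is only possible when n = 4, where it makes the bound of
   [balance_excess_bound] tight; but then [a] and [b] still share two elements. *)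
Lemma excess2_impossible n' (a b : 'I_n'.+1 -> G) s :
  (3 <= n')%N -> bijective s -> merged_match a b s -> excess (mult a) (mult b) <> 2%N.
Proof.
move=> n'_ge3 s_bij match_ab excess2.
have balance v := merged_match_balance v s_bij match_ab.
have := balance_excess_bound balance; rewrite excess2 => bound.
have n'3 : n' = 3%N by move: n'_ge3 bound; case: (n') => // k; nia.
have tight : (n' * n'.-1 * excess (mult a) (mult b) = n'.+1 * n')%N by rewrite excess2 n'3.
have [v [pa pb]] : exists v, (0 < pair_sums a v)%N /\ (0 < pair_sums b v)%N.
  by apply: common_pair_sum; rewrite sum_minn mult_total excess2 n'3.
case: (balance_tight balance tight v) => [pa0 | pb0].
  by move: pa; rewrite pa0.
by move: pb; rewrite pb0.
Qed.

(* The multiset of coefficients is determined by the multisets of the merged families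
   (for at least four coefficients): the excess of [a] over [b] is at most two by
   [balance_excess_bound], and the cases one and two are impossible. *)
Theorem merged_match_mult n' (a b : 'I_n'.+1 -> G) s :
  (3 <= n')%N -> bijective s -> merged_match a b s -> forall x, mult a x = mult b x.
Proof.
move=> n'_ge3 s_bij match_ab; apply: excess0; first by rewrite !mult_total.
have balance v := merged_match_balance v s_bij match_ab.
have := balance_excess_bound balance.
have := excess1_impossible n'_ge3 s_bij match_ab.
have := excess2_impossible n'_ge3 s_bij match_ab.
move: (excess _ _) => e not2 not1 bound.
have e_le2 : (e <= 2)%N by move: n'_ge3 bound; case: (n') => // k; nia.
lia.
Qed.

End MultisetReconstruction.

Section AffineMaps.
Variable G : fieldType.
Local Open Scope ring_scope.

Definition affine_map N (a : 'I_N -> G) (c : G) (x : N.-tuple G) : G :=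
  \sum_(k < N) a k * tnth x k + c.

(* The tuple fed to [f] by the minor f_{ij} at y has entry y_m at position [lift j m]. *)
Lemma minor_entry_lift n' (y : n'.-tuple G) (i j : 'I_n'.+1) (m : 'I_n') :
  (if (lift j m < j)%N then nth 0 y (lift j m)
   else if lift j m == j :> nat then nth 0 y i else nth 0 y (lift j m).-1)
  = tnth y m.
Proof.
rewrite (tnth_nth 0) /= /bump; case: (leqP j m) => le_jm /=.
  rewrite add1n ltnNge (leq_trans le_jm (leqnSn _)) /=.
  by rewrite ifF //; apply/negbTE; rewrite neq_ltn ltnS le_jm orbT.
by rewrite add0n le_jm.
Qed.

Lemma minor_affine_map n' (f : n'.+1.-tuple G -> G) (a : 'I_n'.+1 -> G) c (i j : 'I_n'.+1) :
  (i < j)%N -> (forall x, f x = affine_map a c x) ->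
  forall y, minor f i j y = affine_map (merge_coef a i j) c y.
Proof.
move=> lt_ij fE y; rewrite /minor fE /affine_map; congr (_ + _).
rewrite (bigD1_ord j) //= tnth_mktuple ltnn eqxx.
under eq_bigr do rewrite tnth_mktuple minor_entry_lift.
under [RHS]eq_bigr do rewrite /merge_coef mulrDl.
rewrite big_split /= addrC; congr (_ + _).
have lt_i : (i < n')%N := leq_trans lt_ij (ltn_ord j).
rewrite (bigD1 (Ordinal lt_i)) //= eqxx big1 ?addr0; first by rewrite (tnth_nth 0).
move=> m m_neq_i; rewrite ifF ?mul0r //; apply/negbTE; apply: contra m_neq_i => /eqP eq_mi.
by apply/eqP/val_inj.
Qed.

Lemma minor_affine n' (f : n'.+1.-tuple G -> G) (i j : 'I_n'.+1) :
  (i < j)%N -> affine f -> affine (minor f i j).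
Proof.
by move=> lt_ij [a [c fE]]; exists (merge_coef a i j), c; exact: minor_affine_map lt_ij fE.
Qed.

Definition indicator N (A : {set 'I_N}) : N.-tuple G := [tuple (m \in A)%:R | m < N].

Lemma affine_map_indicator N (a : 'I_N -> G) c A :
  affine_map a c (indicator A) = \sum_(m in A) a m + c.
Proof.
congr (_ + _); rewrite [RHS]big_mkcond /=; apply: eq_bigr => m _.
by rewrite tnth_mktuple; case: (m \in A); rewrite ?mulr1 ?mulr0.
Qed.

(* Equivalent affine maps have the same constant and the same multiset of coefficients:
   compare them at 0 and at the unit vectors. *)
Lemma equiv_affine_map N (F H : N.-tuple G -> G) (a b : 'I_N -> G) c d :
  (forall x, F x = affine_map a c x) -> (forall x, H x = affine_map b d x) ->
  equiv_fun F H -> c = d /\ forall v, mult a v = mult b v.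
Proof.
move=> FE HE [s Fs].
have eval (A : {set 'I_N}) : \sum_(m in A) a m + c = \sum_(m in s @^-1: A) b m + d.
  rewrite -affine_map_indicator -FE Fs HE -affine_map_indicator; congr affine_map.
  by apply: eq_from_tnth => m; rewrite !tnth_mktuple inE.
have eq_cd : c = d by have := eval set0; rewrite preimset0 !big_set0 !add0r.
split=> // v; have s_coef m : a (s m) = b m.
  have := eval [set s m]; rewrite big_set1 eq_cd => /addIr ->.
  have -> : s @^-1: [set s m] = [set m].
    by apply/setP => k; rewrite !inE (inj_eq (@perm_inj _ s)).
  by rewrite big_set1.
rewrite /mult (reindex_inj (@perm_inj _ s)) /=.
by apply: eq_bigr => m _; rewrite s_coef.
Qed.

Lemma equiv_affine N (F H : N.-tuple G -> G) : affine F -> equiv_fun F H -> affine H.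
Proof.
move=> [a [c FE]] [s Fs]; exists (fun k => a (s k)), c => x.
have -> : H x = F [tuple tnth x ((s^-1)%g i) | i < N].
  by rewrite Fs; congr H; apply: eq_from_tnth => i; rewrite !tnth_mktuple permK.
rewrite FE; congr (_ + _); rewrite (reindex_inj (@perm_inj _ s)) /=.
by apply: eq_bigr => k _; rewrite tnth_mktuple permK.
Qed.

Lemma perm_affine_equiv N (F H : N.-tuple G -> G) (a b : 'I_N -> G) c (p : 'S_N) :
  (forall x, F x = affine_map a c x) -> (forall x, H x = affine_map b c x) ->
  (forall k, a k = b (p k)) -> equiv_fun H F.
Proof.
move=> FE HE a_bp; exists p => x; rewrite HE FE; congr (_ + _).
rewrite (reindex_inj (@perm_inj _ p)) /=.
by apply: eq_bigr => k _; rewrite tnth_mktuple a_bp.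
Qed.

End AffineMaps.

Lemma tuple_repeat (T : finType) N (x : N.-tuple T) :
  (#|T| < N)%N -> exists i j : 'I_N, (i < j)%N /\ tnth x i = tnth x j.
Proof.
move=> small_T; have : ~~ injectiveb (tnth x).
  apply/negP => /injectiveP /leq_card; rewrite card_ord => le_NT.
  by have := leq_ltn_trans le_NT small_T; rewrite ltnn.
case/injectivePn => i [j neq_ij eq_ij].
case: (ltngtP i j) => [lt_ij | lt_ji | /val_inj eq_ij']; first by exists i, j.
  by exists j, i.
by rewrite eq_ij' eqxx in neq_ij.
Qed.

Lemma two_outside N (i j : 'I_N) : (4 <= N)%N ->
  exists k l : 'I_N, [/\ (k < l)%N, k \notin [set i; j] & l \notin [set i; j]].
Proof.
move=> N_ge4; set A := ~: [set i; j].
have card_A : (1 < #|A|)%N.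
  by have := cardsC [set i; j]; rewrite card_ord cards2 -/A; case: (i != j) => /=; lia.
have /card_gt0P [k A_k] : (0 < #|A|)%N by lia.
have /card_gt0P [l] : (0 < #|A :\ k|)%N by move: card_A; rewrite (cardsD1 k) A_k; lia.
rewrite in_setD1 in_setC => /andP [l_neq_k A_l]; move: A_k; rewrite in_setC => A_k.
case: (ltngtP k l) => [lt_kl | lt_lk | /val_inj eq_kl]; first by exists k, l.
  by exists l, k.
by rewrite eq_kl eqxx in l_neq_k.
Qed.

Section Gluing.
Variable G : fieldType.
Local Open Scope ring_scope.

Definition diag_affine N (g : N.-tuple G -> G) (i j : 'I_N) : Prop :=
  exists (L : 'I_N -> G) (c : G), forall x, tnth x i = tnth x j -> g x = affine_map L c x.

(* On the diagonal {x_i = x_j}, [g] is its minor g_{ij} evaluated at x without x_j. *)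
Lemma minor_affine_diag n' (g : n'.+1.-tuple G -> G) (i j : 'I_n'.+1) :
  (i < j)%N -> affine (minor g i j) -> diag_affine g i j.
Proof.
move=> lt_ij [a [c minorE]].
exists (fun k => if unlift j k is Some m then a m else 0), c => x x_ij.
pose y : n'.-tuple G := [tuple tnth x (lift j m) | m < n'].
have lt_i : (i < n')%N := leq_trans lt_ij (ltn_ord j).
have -> : g x = minor g i j y.
  rewrite /minor; congr g; apply: eq_from_tnth => k; rewrite tnth_mktuple.
  case: (unliftP j k) => [m -> | ->]; first by rewrite minor_entry_lift tnth_mktuple.
  rewrite ltnn eqxx -x_ij -[y`_i](tnth_nth 0 y (Ordinal lt_i)) tnth_mktuple.
  by congr tnth; apply: val_inj; rewrite /= /bump leqNgt lt_ij.
rewrite minorE /affine_map; congr (_ + _).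
rewrite (bigD1_ord j) //= unlift_none mul0r add0r.
by apply: eq_bigr => m _; rewrite liftK tnth_mktuple.
Qed.

Lemma diag_indicator N (g : N.-tuple G -> G) (i j : 'I_N) L c (A : {set 'I_N}) :
  (forall x, tnth x i = tnth x j -> g x = affine_map L c x) ->
  (i \in A) = (j \in A) -> g (indicator G A) = \sum_(m in A) L m + c.
Proof. by move=> gE ij_A; rewrite gE ?affine_map_indicator // !tnth_mktuple ij_A. Qed.

(* Evaluating on a diagonal avoiding i and j shows that [g] is additive on e_i, e_j. *)
Lemma glue_additive N (g : N.-tuple G -> G) (i j : 'I_N) :
  (4 <= N)%N -> (forall k l : 'I_N, (k < l)%N -> diag_affine g k l) -> i != j ->
  g (indicator G [set i; j]) + g (indicator G set0)
  = g (indicator G [set i]) + g (indicator G [set j]).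
Proof.
move=> N_ge4 g_diag neq_ij; have [k [l [lt_kl k_out l_out]]] := two_outside i j N_ge4.
have [L [c gE]] := g_diag k l lt_kl.
have on_diag (A : {set 'I_N}) :
    A \subset [set i; j] -> g (indicator G A) = \sum_(m in A) L m + c.
  move=> sub_A; apply: diag_indicator gE _.
  by rewrite (contraNF (subsetP sub_A k) k_out) (contraNF (subsetP sub_A l) l_out).
rewrite !on_diag ?sub0set ?sub1set ?inE ?eqxx ?orbT //.
by rewrite big_setU1 ?inE //= !big_set1 big_set0; ring.
Qed.

End Gluing.

Section GluingFinite.
Local Open Scope ring_scope.

(* If [g] is affine on every diagonal and every point lies on a diagonal (n > q), the
   diagonal representations glue to the affine map with coefficients g(e_k) - g(0). *)
Lemma diag_affine_glue (G : finFieldType) N (g : N.-tuple G -> G) :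
  (4 <= N)%N -> (#|G| < N)%N -> (forall i j : 'I_N, (i < j)%N -> diag_affine g i j) ->
  affine g.
Proof.
move=> N_ge4 small_G g_diag.
pose d := g (indicator G set0); pose b k := g (indicator G [set k]) - d.
exists b, d => x; have [i [j [lt_ij x_ij]]] := tuple_repeat x small_G.
have [L [c gE]] := g_diag i j lt_ij.
have neq_ij : i != j by rewrite neq_ltn lt_ij.
have eq_dc : d = c by rewrite /d (diag_indicator gE) ?inE // big_set0 add0r.
have b_out m : m \notin [set i; j] -> b m = L m.
  rewrite !inE negb_or => /andP [m_i m_j].
  rewrite /b (diag_indicator gE) ?big_set1 ?eq_dc ?addrK // !inE.
  by rewrite eq_sym (negbTE m_i) eq_sym (negbTE m_j).
have b_ij : b i + b j = L i + L j.
  have := glue_additive N_ge4 g_diag neq_ij.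
  rewrite (diag_indicator gE) ?inE ?eqxx ?orbT // big_setU1 ?inE //= big_set1 -/d => sum_ij.
  by rewrite /b addrACA -sum_ij eq_dc; ring.
rewrite gE // /affine_map eq_dc; congr (_ + _); apply/eqP; rewrite -subr_eq0 -sumrB.
rewrite (bigD1 i) //= (bigD1 j) 1?eq_sym //= big1 => [|m /andP [m_i m_j]]; last first.
  by rewrite b_out ?subrr // !inE negb_or m_i m_j.
have -> : L i * tnth x i - b i * tnth x i + (L j * tnth x j - b j * tnth x j + 0)
          = (L i + L j - (b i + b j)) * tnth x j by rewrite x_ij; ring.
by rewrite b_ij subrr mul0r.
Qed.

End GluingFinite.

Theorem mainTheorem14 (G : finFieldType) (n : nat)
  (hn : (maxn #|G| 3).+1 <= n)
  (f g : n.-tuple G -> G) :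
  affine f -> same_deck f g -> equiv_fun g f.
Proof.
case: n hn f g => [|n'] // hn f g f_aff [s [s_bij deck]]; have [a [c fE]] := f_aff.
move: hn; rewrite ltnS geq_max => /andP [small_G n'_ge3].
have [s' _ s'K] := s_bij.
(* Step 1: every minor of g is equivalent to an affine minor of f, hence g is affine. *)
have g_diag (i j : 'I_n'.+1) : (i < j)%N -> diag_affine g i j.
  move=> lt_ij; apply: (minor_affine_diag lt_ij).
  have := deck (s' (exist _ (i, j) lt_ij)); rewrite s'K.
  exact/equiv_affine/(minor_affine (valP (s' _)) f_aff).
have [b [d gE]] := diag_affine_glue (n'_ge3 : 3 < n'.+1) small_G g_diag.
(* Step 2: matched minors of f and g have equal constants and coefficient multisets. *)
have params I := equiv_affine_map (minor_affine_map (valP I) fE)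
                                  (minor_affine_map (valP (s I)) gE) (deck I).
have lt_0n : (@ord0 n' < @ord_max n')%N by rewrite /= (leq_trans _ n'_ge3).
have eq_cd : c = d := (params (exist _ (ord0, ord_max) lt_0n)).1.
have [p a_bp] := mult_perm (merged_match_mult n'_ge3 s_bij (fun I => (params I).2)).
by apply: perm_affine_equiv fE _ a_bp => x; rewrite gE eq_cd.
Qed.
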